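(* Let $P$ be a program and let $\tau = \alpha \cdot \mathit{issue}(p,t) \cdot \beta \cdot \mathit{com}(p,t) \cdot \gamma$ be a minimal anomaly of $P$ such that $\mathit{issue}(p,t)$ happens before $\mathit{com}(p,t)$ through $\beta$. Then $\tau' = \alpha \cdot \mathit{issue}(p,t) \cdot \beta \cdot \mathit{com}(p,t)$ is also a minimal anomaly of $P$.
   Context: Programs: parallel compositions of processes, each a sequence of transactions (reads of shared variables into registers, writes of register expressions to shared variables, assume statements, delimited by begin and commit). Snapshot isolation (SI): a transaction reads/writes a local snapshot of the central memory taken at its begin and can commit (publishing its writes) only if no transaction committed after its begin wrote a variable it writes. Serializability: every transaction executes atomically. Traces: each transaction $t$ of process $p$ yields an issue event $\mathit{issue}(p,t)$ (begin, reads, local writes) and a commit event $\mathit{com}(p,t)$. Dependencies: $\mathsf{po}$ (program order), $\mathsf{rf}$ (write-read), $\mathsf{st}$ (store order between writes to the same variable), $\mathsf{cf}$ (conflict: a read does not see a write to the same variable that would affect it if visible), and issue-to-commit of the same transaction; $\mathsf{hb}^1$ is their union, $\mathsf{hb}$ its transitive closure. An anomaly of $P$ is a trace of an SI execution of $P$ that is not a trace of any serializable execution of $P$. ''$a$ happens before $b$ through $\beta$'' (in a trace $\alpha\cdot a\cdot\beta\cdot b\cdot\gamma$) means there is a nonempty subsequence $c_1\cdots c_n$ of $\beta$ with $c_i\to_{\mathsf{hb}^1}c_{i+1}$ for all $i\in[0,n]$, $c_0=a$, $c_{n+1}=b$. A transaction $t$ is delayed in a trace $\tau=\alpha\cdot\mathit{issue}(p,t)\cdot\beta\cdot\mathit{com}(p,t)\cdot\gamma$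 if $\mathit{issue}(p,t)$ happens before $\mathit{com}(p,t)$ through $\beta$. $\#(\tau)$ is the number of delayed transactions in $\tau$, and an anomaly is minimal if it has the least number of delayed transactions among all anomalies of $P$. *)

(* A small-step snapshot-isolation semantics for programs made of
   processes, each a sequence of transactions, following the paper's model where
   the begin, the reads and the local writes of a transaction form one atomic
   "issue" event and the commit is a separate event. *)
From Stdlib Require Import List Arith Bool ClassicalEpsilon.
From Stdlib Require Import Sorting.Sorted.
Import ListNotations.

Definition var := nat.
Definition reg := nat.
Definition val := nat.
Definition pid := nat.   (* a process = its index in the program *)
Definition tid := nat.   (* a transaction = its index in its process *)

Definition regs := reg -> val.

(* Instructions inside a transaction (begin/commit delimiters are implicit):
   r := x ; x := e(registers) ; assume c(registers). *)
Inductive instr :=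
| IRead (r : reg) (x : var)
| IWrite (x : var) (e : regs -> val)
| IAssume (c : regs -> bool).

Definition txn := list instr.
Definition process := list txn.
Definition program := list process.

Inductive event :=
| Issue (p : pid) (t : tid)
| Com (p : pid) (t : tid).

Definition upd {A} (f : nat -> A) (n : nat) (v : A) : nat -> A :=
  fun m => if Nat.eqb m n then v else f m.

Fixpoint lookup (x : var) (l : list (var * val)) : option val :=
  match l with
  | [] => None
  | (y, v) :: l' => if Nat.eqb x y then Some v else lookup x l'
  end.

(* Returns the new
   registers, the local write buffer (most recent first) and the list of
   variables read from the snapshot (reads not preceded by a local write to the
   same variable).  [None] = blocked by a failing assume. *)
Fixpoint run_body (snap : var -> val) (rs : regs) (lw : list (var * val))
         (rd : list var) (b : txn) : option (regs * list (var * val) * list var) :=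
  match b with
  | [] => Some (rs, lw, rd)
  | IRead r x :: b' =>
      match lookup x lw with
      | Some v => run_body snap (upd rs r v) lw rd b'
      | None => run_body snap (upd rs r (snap x)) lw (x :: rd) b'
      end
  | IWrite x e :: b' => run_body snap rs ((x, e rs) :: lw) rd b'
  | IAssume c :: b' => if c rs then run_body snap rs lw rd b' else None
  end.

Record pend := mkPend {
  pd_t : tid;
  pd_wr : list (var * val);
  pd_start : nat                 (* length of the commit log at its issue *)
}.

Record state := mkState {
  mem : var -> val * option (pid * tid);  (* central memory: value and last writer *)
  rgs : pid -> regs;
  pc : pid -> tid;                         (* next transaction of each process *)
  pending : pid -> option pend;
  clog : list (list var)                   (* variables written by each commit, in commit order *)
}.

Definition init_state : state :=
  mkState (fun _ => (0, None)) (fun _ _ => 0) (fun _ => 0) (fun _ => None) [].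

Definition issue_info (P : program) (s : state) (p : pid) (t : tid)
  : option (regs * list (var * val) * list var) :=
  match nth_error P p with
  | None => None
  | Some pr =>
      match nth_error pr t with
      | None => None
      | Some body => run_body (fun x => fst (mem s x)) (rgs s p) [] [] body
      end
  end.

Definition no_conflict (wr : list (var * val)) (later : list (list var)) : bool :=
  forallb (fun ws => negb (existsb (fun x => existsb (Nat.eqb x) ws) (map fst wr))) later.

Definition step (P : program) (s : state) (e : event) : option state :=
  match e with
  | Issue p t =>
      match pending s p with
      | Some _ => None
      | None =>
          if Nat.eqb (pc s p) t then
            match issue_info P s p t with
            | None => None
            | Some (rs, wr, _) =>
                Some (mkState (mem s) (upd (rgs s) p rs) (pc s)
                        (upd (pending s) p (Some (mkPend t wr (length (clog s)))))
                        (clog s))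
            end
          else None
      end
  | Com p t =>
      match pending s p with
      | None => None
      | Some pd =>
          if Nat.eqb (pd_t pd) t && no_conflict (pd_wr pd) (skipn (pd_start pd) (clog s))
          then
            Some (mkState
                    (fun x => match lookup x (pd_wr pd) with
                              | Some v => (v, Some (p, t))
                              | None => mem s x
                              end)
                    (rgs s) (upd (pc s) p (S t)) (upd (pending s) p None)
                    (clog s ++ [map fst (pd_wr pd)]))
          else None
      end
  end.

Definition replay (P : program) (rho : list event) : option state :=
  fold_left (fun os e => match os with Some s => step P s e | None => None end)
            rho (Some init_state).

Definition exec_SI (P : program) (rho : list event) : Prop := replay P rho <> None.

(* Serializability: every transaction executes atomically, i.e. each issue event
   whose commit occurs is immediately followed by that commit. *)
Definition serial (rho : list event) : Prop :=
  forall a b p t, rho = a ++ Issue p t :: b -> In (Com p t) b ->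
    exists b', b = Com p t :: b'.

Definition exec_SER (P : program) (rho : list event) : Prop :=
  exec_SI P rho /\ serial rho.

(* transaction (p,t) reads x from its snapshot, and that snapshot value was
   written by w (None = initial value) *)
Definition reads_from (P : program) (rho : list event) (p : pid) (t : tid)
           (x : var) (w : option (pid * tid)) : Prop :=
  exists a b s rs wr rd, rho = a ++ Issue p t :: b /\ replay P a = Some s /\
    issue_info P s p t = Some (rs, wr, rd) /\ In x rd /\ snd (mem s x) = w.

Definition reads (P : program) (rho : list event) (p : pid) (t : tid) (x : var) : Prop :=
  exists w, reads_from P rho p t x w.

Definition writes (P : program) (rho : list event) (p : pid) (t : tid) (x : var) : Prop :=
  exists a b s rs wr rd, rho = a ++ Issue p t :: b /\ replay P a = Some s /\
    issue_info P s p t = Some (rs, wr, rd) /\ In x (map fst wr).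

Definition before (rho : list event) (e1 e2 : event) : Prop :=
  exists a b, rho = a ++ e1 :: b /\ In e2 b.

Definition ev_pid (e : event) : pid := match e with Issue p _ | Com p _ => p end.
Definition ev_tid (e : event) : tid := match e with Issue _ t | Com _ t => t end.

Definition po (rho : list event) (e1 e2 : event) : Prop :=
  In e1 rho /\ In e2 rho /\ ev_pid e1 = ev_pid e2 /\ ev_tid e1 < ev_tid e2.

Definition rf (P : program) (rho : list event) (e1 e2 : event) : Prop :=
  exists p1 t1 p2 t2 x, e1 = Com p1 t1 /\ e2 = Issue p2 t2 /\ In e1 rho /\
    reads_from P rho p2 t2 x (Some (p1, t1)).

Definition st (P : program) (rho : list event) (e1 e2 : event) : Prop :=
  exists p1 t1 p2 t2 x, e1 = Com p1 t1 /\ e2 = Com p2 t2 /\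
    writes P rho p1 t1 x /\ writes P rho p2 t2 x /\ before rho e1 e2.

(* a snapshot read of x in (p1,t1) does not see the write to x of (p2,t2),
   committed after the issue of (p1,t1) *)
Definition cf (P : program) (rho : list event) (e1 e2 : event) : Prop :=
  exists p1 t1 p2 t2 x, e1 = Issue p1 t1 /\ e2 = Com p2 t2 /\ (p1, t1) <> (p2, t2) /\
    reads P rho p1 t1 x /\ writes P rho p2 t2 x /\ before rho e1 e2.

Definition itc (rho : list event) (e1 e2 : event) : Prop :=
  exists p t, e1 = Issue p t /\ e2 = Com p t /\ In e1 rho /\ In e2 rho.

Definition hb1 (P : program) (rho : list event) (e1 e2 : event) : Prop :=
  po rho e1 e2 \/ rf P rho e1 e2 \/ st P rho e1 e2 \/ cf P rho e1 e2 \/ itc rho e1 e2.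

Definition same_trace (P : program) (r1 r2 : list event) : Prop :=
  (forall e, In e r1 <-> In e r2) /\
  (forall e1 e2, po r1 e1 e2 <-> po r2 e1 e2) /\
  (forall e1 e2, rf P r1 e1 e2 <-> rf P r2 e1 e2) /\
  (forall e1 e2, st P r1 e1 e2 <-> st P r2 e1 e2) /\
  (forall e1 e2, cf P r1 e1 e2 <-> cf P r2 e1 e2).

Definition anomaly (P : program) (tau : list event) : Prop :=
  exec_SI P tau /\ ~ (exists rho, exec_SER P rho /\ same_trace P tau rho).

Inductive subseq {A} : list A -> list A -> Prop :=
| subseq_nil : subseq [] []
| subseq_keep x l1 l2 : subseq l1 l2 -> subseq (x :: l1) (x :: l2)
| subseq_skip x l1 l2 : subseq l1 l2 -> subseq l1 (x :: l2).

Definition hb_through (P : program) (tau : list event) (a : event)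
           (beta : list event) (b : event) : Prop :=
  exists cs, cs <> [] /\ subseq cs beta /\ LocallySorted (hb1 P tau) (a :: cs ++ [b]).

Definition delayed (P : program) (tau : list event) (pt : pid * tid) : Prop :=
  exists a b g, tau = a ++ Issue (fst pt) (snd pt) :: b ++ Com (fst pt) (snd pt) :: g /\
    hb_through P tau (Issue (fst pt) (snd pt)) b (Com (fst pt) (snd pt)).

Definition pt_eq_dec : forall x y : pid * tid, {x = y} + {x <> y}.
Proof. decide equality; apply Nat.eq_dec. Defined.

Definition issued (tau : list event) : list (pid * tid) :=
  nodup pt_eq_dec
    (flat_map (fun e => match e with Issue p t => [(p, t)] | Com _ _ => [] end) tau).

Definition ndelayed (P : program) (tau : list event) : nat :=
  length (filter (fun pt => if excluded_middle_informative (delayed P tau pt)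
                            then true else false) (issued tau)).

Definition minimal_anomaly (P : program) (tau : list event) : Prop :=
  anomaly P tau /\ forall tau', anomaly P tau' -> ndelayed P tau <= ndelayed P tau'.

(* In every SI execution each hb^1 edge points forward, and the prefix tau'
   of tau ending at com(p,t) is again an SI execution whose hb^1 edges among
   its own events are those of tau.  So the chain from issue(p,t) through beta
   to com(p,t) survives in tau', and a serial execution with the trace of tau'
   would have to schedule an event of beta strictly between issue(p,t) and
   com(p,t), which serializability forbids: tau' is an anomaly.  Delayed
   transactions of tau' stay delayed in tau, hence #(tau') <= #(tau), and the
   minimality of tau passes to tau'. *)

From Stdlib Require Import List Arith Lia Sorting.Sorted ClassicalEpsilon.
Import ListNotations.

Lemma NoDup_split_unique {A} (a b a' b' : list A) x :
  NoDup (a ++ x :: b) -> a ++ x :: b = a' ++ x :: b' -> a = a' /\ b = b'.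
Proof.
  revert a'. induction a as [|y a IH]; intros [|y' a'] Hn He; simpl in *.
  - injection He as ->. auto.
  - injection He as -> E. apply NoDup_cons_iff in Hn as [Hn _].
    exfalso; apply Hn. rewrite E. apply in_app_iff; simpl; auto.
  - injection He as -> E. apply NoDup_cons_iff in Hn as [Hn _].
    exfalso; apply Hn, in_app_iff; simpl; auto.
  - injection He as -> E. apply NoDup_cons_iff in Hn as [_ Hn].
    destruct (IH a' Hn E) as [-> ->]. auto.
Qed.

Lemma NoDup_snoc {A} (l : list A) x : NoDup l -> ~ In x l -> NoDup (l ++ [x]).
Proof.
  intros H1 H2. apply NoDup_app; auto.
  - repeat constructor; auto.
  - intros a Ha [<-|[]]; auto.
Qed.

Lemma LocallySorted_impl_in {A} (R T : A -> A -> Prop) l :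
  (forall x y, In x l -> In y l -> R x y -> T x y) -> LocallySorted R l -> LocallySorted T l.
Proof.
  intros Himp H. induction H; constructor.
  - apply IHLocallySorted. intros x y Hx Hy. apply Himp; simpl; auto.
  - apply Himp; simpl; auto.
Qed.

Section Replay.
Variable P : program.

Lemma replay_snoc l e :
  replay P (l ++ [e]) = match replay P l with Some s => step P s e | None => None end.
Proof. unfold replay. now rewrite fold_left_app. Qed.

Lemma replay_prefix l1 l2 : replay P (l1 ++ l2) <> None -> exists s, replay P l1 = Some s.
Proof.
  unfold replay. rewrite fold_left_app.
  destruct (fold_left _ l1 _) as [s|]; [eauto|].
  intros H. exfalso. apply H. clear H. induction l2; simpl; auto.
Qed.

Lemma exec_SI_prefix l1 l2 : exec_SI P (l1 ++ l2) -> exec_SI P l1.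
Proof. intros H. destruct (replay_prefix _ _ H) as [s Hs]. unfold exec_SI. congruence. Qed.

Lemma step_at a e b : exec_SI P (a ++ e :: b) ->
  exists s s', replay P a = Some s /\ step P s e = Some s'.
Proof.
  intros H. rewrite <- (app_nil_l b), app_comm_cons, app_assoc in H.
  destruct (replay_prefix _ _ H) as [s' Hs']. rewrite replay_snoc in Hs'.
  destruct (replay P a) as [s|]; [eauto|discriminate].
Qed.

Record reachable_inv (l : list event) (s : state) : Prop := {
  inv_pending : forall p pd, pending s p = Some pd ->
    pd_t pd = pc s p /\ In (Issue p (pd_t pd)) l;
  inv_issued : forall p t, In (Issue p t) l ->
    t < pc s p \/ (t = pc s p /\ pending s p <> None);
  inv_committed : forall p t, In (Com p t) l -> t < pc s p;
  inv_writer : forall x p t, snd (mem s x) = Some (p, t) -> In (Com p t) l;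
  inv_nodup : NoDup l }.

Lemma reachable_inv_init : reachable_inv [] init_state.
Proof. split; simpl; try easy. constructor. Qed.

Lemma reachable_inv_issue l s p t s' : reachable_inv l s ->
  step P s (Issue p t) = Some s' -> reachable_inv (l ++ [Issue p t]) s'.
Proof.
  intros [I1 I2 I3 I4 I5] H. simpl in H.
  destruct (pending s p) eqn:Hp; [discriminate|].
  destruct (Nat.eqb_spec (pc s p) t) as [<-|]; [|discriminate].
  destruct (issue_info P s p (pc s p)) as [[[rs wr] rd]|]; [|discriminate].
  injection H as <-. split; simpl; unfold upd.
  - intros q pd. destruct (Nat.eqb_spec q p) as [->|].
    + intros E. injection E as <-. simpl. rewrite in_app_iff; simpl; auto.
    + intros E. destruct (I1 _ _ E). rewrite in_app_iff; auto.
  - intros q t'. rewrite in_app_iff; simpl. intros [Hin|[E|[]]].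
    + destruct (Nat.eqb_spec q p) as [->|]; [|now apply I2].
      destruct (I2 _ _ Hin) as [|[_ Hn]]; [auto|congruence].
    + injection E as -> ->. rewrite Nat.eqb_refl. right. split; congruence.
  - intros q t'. rewrite in_app_iff; simpl. intros [Hin|[E|[]]]; [auto|discriminate].
  - intros x q t' Hm. rewrite in_app_iff; eauto.
  - apply NoDup_snoc; auto. intros Hin.
    destruct (I2 _ _ Hin) as [|[_ Hn]]; [lia|congruence].
Qed.

Lemma reachable_inv_com l s p t s' : reachable_inv l s ->
  step P s (Com p t) = Some s' -> reachable_inv (l ++ [Com p t]) s'.
Proof.
  intros [I1 I2 I3 I4 I5] H. simpl in H.
  destruct (pending s p) as [pd|] eqn:Hp; [|discriminate].
  destruct (Nat.eqb_spec (pd_t pd) t) as [<-|]; [|discriminate].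
  destruct (no_conflict _ _); [|discriminate].
  destruct (I1 _ _ Hp) as [Ept _].
  injection H as <-. split; simpl; unfold upd.
  - intros q pd'. destruct (Nat.eqb_spec q p); [discriminate|].
    intros E. destruct (I1 _ _ E). rewrite in_app_iff; auto.
  - intros q t'. rewrite in_app_iff; simpl. intros [Hin|[E|[]]]; [|discriminate].
    destruct (Nat.eqb_spec q p) as [->|]; [|now apply I2].
    destruct (I2 _ _ Hin) as [|[]]; left; lia.
  - intros q t'. rewrite in_app_iff; simpl. intros [Hin|[E|[]]].
    + specialize (I3 _ _ Hin). destruct (Nat.eqb_spec q p); subst; lia.
    + injection E as -> ->. rewrite Nat.eqb_refl. lia.
  - intros x q t'. rewrite in_app_iff; simpl.
    destruct (lookup x (pd_wr pd)); simpl; [|eauto].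
    intros E. injection E as -> ->. auto.
  - apply NoDup_snoc; auto. intros Hin. specialize (I3 _ _ Hin). lia.
Qed.

Lemma replay_reachable_inv l s : replay P l = Some s -> reachable_inv l s.
Proof.
  revert s. induction l as [|e l IH] using rev_ind; intros s H.
  - injection H as <-. apply reachable_inv_init.
  - rewrite replay_snoc in H. destruct (replay P l) as [s0|]; [|discriminate].
    destruct e; [eapply reachable_inv_issue | eapply reachable_inv_com]; eauto.
Qed.

Lemma exec_SI_NoDup rho : exec_SI P rho -> NoDup rho.
Proof.
  unfold exec_SI. destruct (replay P rho) eqn:E; [|easy].
  intros _. exact (inv_nodup _ _ (replay_reachable_inv _ _ E)).
Qed.

Lemma step_com_pending s p t s' : step P s (Com p t) = Some s' ->
  exists pd, pending s p = Some pd /\ pd_t pd = t.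
Proof.
  simpl. destruct (pending s p) as [pd|]; [|discriminate].
  destruct (Nat.eqb_spec (pd_t pd) t); [eauto|discriminate].
Qed.

Lemma step_tid_pc l s e s' : reachable_inv l s -> step P s e = Some s' ->
  ev_tid e = pc s (ev_pid e).
Proof.
  intros I H. destruct e as [p t|p t].
  - simpl in *. destruct (pending s p); [discriminate|].
    destruct (Nat.eqb_spec (pc s p) t); [auto|discriminate].
  - destruct (step_com_pending _ _ _ _ H) as [pd [Hp <-]].
    exact (proj1 (inv_pending _ _ I _ _ Hp)).
Qed.

Lemma reachable_tid_le_pc l s e : reachable_inv l s -> In e l -> ev_tid e <= pc s (ev_pid e).
Proof.
  intros I Hin. destruct e as [p t|p t]; simpl.
  - destruct (inv_issued _ _ I _ _ Hin) as [|[]]; lia.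
  - specialize (inv_committed _ _ I _ _ Hin). lia.
Qed.

End Replay.

Section Order.
Variables (P : program) (rho : list event).

Lemma before_in x y : before rho x y -> In x rho /\ In y rho.
Proof. intros [a [b [-> H]]]. split; apply in_app_iff; simpl; auto. Qed.

Lemma before_of_split a b x y : rho = a ++ y :: b -> In x a -> before rho x y.
Proof.
  intros -> H. destruct (in_split _ _ H) as [a1 [a2 ->]].
  exists a1, (a2 ++ y :: b). rewrite <- app_assoc. split; [reflexivity|].
  apply in_app_iff; simpl; auto.
Qed.

Hypothesis N : NoDup rho.

Lemma before_trans x y z : before rho x y -> before rho y z -> before rho x z.
Proof.
  intros [a1 [b1 [E1 Hy]]] [a2 [b2 [E2 Hz]]].
  destruct (in_split _ _ Hy) as [c [d ->]].
  assert (E3 : rho = (a1 ++ x :: c) ++ y :: d) by (rewrite E1, <- app_assoc; reflexivity).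
  rewrite E3 in N, E2. destruct (NoDup_split_unique _ _ _ _ _ N E2) as [_ ->].
  exists a1, (c ++ y :: b2). split; auto. apply in_app_iff; simpl; auto.
Qed.

Lemma before_irrefl x : ~ before rho x x.
Proof.
  intros [a [b [E H]]]. rewrite E in N. apply NoDup_remove_2 in N.
  apply N, in_app_iff; auto.
Qed.

End Order.

Section ForwardEdges.
Variables (P : program) (rho : list event).
Hypothesis Hrho : exec_SI P rho.

Lemma com_after_issue p t : In (Com p t) rho -> before rho (Issue p t) (Com p t).
Proof.
  intros Hin. destruct (in_split _ _ Hin) as [a [b E]]. rewrite E in Hrho.
  destruct (step_at P _ _ _ Hrho) as [s [s' [Hs Hst]]].
  destruct (step_com_pending P _ _ _ _ Hst) as [pd [Hp <-]].
  apply (before_of_split rho a b); auto.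
  exact (proj2 (inv_pending _ _ (replay_reachable_inv P _ _ Hs) _ _ Hp)).
Qed.

(* An event is executed only when its transaction index equals the program
   counter of its process, and that counter bounds the indices of all earlier
   events of the process. *)
Lemma po_before e1 e2 : po rho e1 e2 -> before rho e1 e2.
Proof.
  intros [H1 [H2 [Hp Ht]]]. destruct (in_split _ _ H2) as [a [b E]].
  rewrite E in H1. apply in_app_iff in H1 as [H1|[<-|H1]].
  - eapply before_of_split; eauto.
  - lia.
  - exfalso. destruct (in_split _ _ H1) as [c [d ->]].
    rewrite E, app_comm_cons, app_assoc in Hrho.
    destruct (step_at P _ _ _ Hrho) as [s [s' [Hs Hst]]].
    assert (I := replay_reachable_inv P _ _ Hs).
    assert (Hle : ev_tid e2 <= pc s (ev_pid e2)).
    { apply (reachable_tid_le_pc _ _ _ I), in_app_iff; simpl; auto. }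
    assert (Heq := step_tid_pc P _ _ _ _ I Hst). rewrite Hp in Heq. lia.
Qed.

Lemma hb1_before e1 e2 : hb1 P rho e1 e2 -> before rho e1 e2.
Proof.
  intros [Hh|[Hh|[Hh|[Hh|Hh]]]].
  - now apply po_before.
  - destruct Hh as (p1 & t1 & p2 & t2 & x & -> & -> & _ & a & b & s & rs & wr & rd & E & Hs & _ & _ & Hw).
    eapply before_of_split; [exact E|].
    exact (inv_writer _ _ (replay_reachable_inv P _ _ Hs) _ _ _ Hw).
  - now destruct Hh as (p1 & t1 & p2 & t2 & x & _ & _ & _ & _ & Hb).
  - now destruct Hh as (p1 & t1 & p2 & t2 & x & _ & _ & _ & _ & _ & Hb).
  - destruct Hh as (p & t & -> & -> & _ & Hin). now apply com_after_issue.
Qed.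

End ForwardEdges.

Section Prefix.
Variables (P : program) (tau g : list event).

Lemma hb1_app x y : hb1 P tau x y -> hb1 P (tau ++ g) x y.
Proof.
  assert (IE : forall e, In e tau -> In e (tau ++ g)) by (intros; apply in_app_iff; auto).
  assert (RF : forall p t z w, reads_from P tau p t z w -> reads_from P (tau ++ g) p t z w).
  { intros p t z w (a & b & s & rs & wr & rd & -> & R).
    exists a, (b ++ g), s, rs, wr, rd. now rewrite <- app_assoc. }
  assert (WR : forall p t z, writes P tau p t z -> writes P (tau ++ g) p t z).
  { intros p t z (a & b & s & rs & wr & rd & -> & R).
    exists a, (b ++ g), s, rs, wr, rd. now rewrite <- app_assoc. }
  assert (BE : forall e1 e2, before tau e1 e2 -> before (tau ++ g) e1 e2).
  { intros e1 e2 (a & b & -> & B). exists a, (b ++ g).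
    rewrite <- app_assoc. split; [reflexivity|]. apply in_app_iff; auto. }
  intros [Hh|[Hh|[Hh|[Hh|Hh]]]].
  - left. destruct Hh as (A & B & C & D). repeat split; auto.
  - right; left. destruct Hh as (p1 & t1 & p2 & t2 & z & E1 & E2 & I & R).
    exists p1, t1, p2, t2, z. auto.
  - right; right; left. destruct Hh as (p1 & t1 & p2 & t2 & z & E1 & E2 & W1 & W2 & B).
    exists p1, t1, p2, t2, z. auto 7.
  - right; right; right; left.
    destruct Hh as (p1 & t1 & p2 & t2 & z & E1 & E2 & Ne & [w R] & W2 & B).
    exists p1, t1, p2, t2, z. repeat split; eauto. exists w; auto.
  - right; right; right; right. destruct Hh as (p & t & E1 & E2 & I1 & I2).
    exists p, t; auto.
Qed.

Hypothesis Hexec : exec_SI P (tau ++ g).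

Lemma split_prefix a e b : In e tau -> tau ++ g = a ++ e :: b ->
  exists b', tau = a ++ e :: b' /\ b = b' ++ g.
Proof.
  intros Hin E. assert (N := exec_SI_NoDup P _ Hexec).
  destruct (in_split _ _ Hin) as [a' [b' ->]]. rewrite <- app_assoc in N, E.
  destruct (NoDup_split_unique _ _ _ _ _ N E) as [-> <-]. eauto.
Qed.

Lemma reads_from_prefix p t x w : In (Issue p t) tau ->
  reads_from P (tau ++ g) p t x w -> reads_from P tau p t x w.
Proof.
  intros Hin (a & b & s & rs & wr & rd & E & R).
  destruct (split_prefix _ _ _ Hin E) as [b' [E' _]].
  exists a, b', s, rs, wr, rd. auto.
Qed.

Lemma writes_prefix p t x : In (Issue p t) tau ->
  writes P (tau ++ g) p t x -> writes P tau p t x.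
Proof.
  intros Hin (a & b & s & rs & wr & rd & E & R).
  destruct (split_prefix _ _ _ Hin E) as [b' [E' _]].
  exists a, b', s, rs, wr, rd. auto.
Qed.

Lemma before_prefix x y : In x tau -> In y tau ->
  before (tau ++ g) x y -> before tau x y.
Proof.
  intros Hx Hy (a & b & E & Hb). assert (N := exec_SI_NoDup P _ Hexec).
  destruct (split_prefix _ _ _ Hx E) as [b' [E' ->]].
  exists a, b'. split; auto. apply in_app_iff in Hb as [|Hb]; auto.
  exfalso. destruct (in_split _ _ Hb) as [c [d ->]].
  rewrite app_assoc in N. apply NoDup_remove_2 in N.
  apply N. rewrite <- app_assoc. apply in_app_iff; auto.
Qed.

Lemma com_in_prefix_issue p t : In (Com p t) tau -> In (Issue p t) tau.
Proof.
  intros Hc. apply (before_in tau _ (Com p t)), com_after_issue with P; auto.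
  exact (exec_SI_prefix P _ _ Hexec).
Qed.

Lemma hb1_prefix x y : In x tau -> In y tau -> hb1 P (tau ++ g) x y -> hb1 P tau x y.
Proof.
  intros Hx Hy [Hh|[Hh|[Hh|[Hh|Hh]]]].
  - left. destruct Hh as (_ & _ & R1 & R2). repeat split; auto.
  - right; left. destruct Hh as (p1 & t1 & p2 & t2 & z & -> & -> & _ & R).
    exists p1, t1, p2, t2, z. repeat split; auto. now apply reads_from_prefix.
  - right; right; left. destruct Hh as (p1 & t1 & p2 & t2 & z & -> & -> & W1 & W2 & B).
    exists p1, t1, p2, t2, z.
    repeat split; [apply writes_prefix; auto; apply com_in_prefix_issue; auto ..|].
    now apply before_prefix.
  - right; right; right; left.
    destruct Hh as (p1 & t1 & p2 & t2 & z & -> & -> & Ne & [w R] & W2 & B).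
    exists p1, t1, p2, t2, z. repeat split; auto.
    + exists w. now apply reads_from_prefix.
    + apply writes_prefix; auto. now apply com_in_prefix_issue.
    + now apply before_prefix.
  - right; right; right; right. destruct Hh as (p & t & -> & -> & _). exists p, t; auto.
Qed.

Lemma hb_through_prefix a beta b : In a tau -> incl (beta ++ [b]) tau ->
  hb_through P (tau ++ g) a beta b -> hb_through P tau a beta b.
Proof.
  intros Ha Hinc (cs & Hne & Hsub & HL). exists cs. repeat split; auto.
  assert (Hcs : forall x, In x (a :: cs ++ [b]) -> In x tau).
  { intros x [<-|Hx]; auto. apply Hinc, in_app_iff.
    apply in_app_iff in Hx as [Hx|Hx]; auto.
    left. clear -Hsub Hx. induction Hsub; simpl in *; intuition. }
  eapply LocallySorted_impl_in; [|exact HL].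
  intros x y Hx Hy. apply hb1_prefix; auto.
Qed.

End Prefix.

Lemma hb1_same_trace P r1 r2 x y : same_trace P r1 r2 -> hb1 P r1 x y -> hb1 P r2 x y.
Proof.
  intros (HI & Hpo & Hrf & Hst & Hcf) [H|[H|[H|[H|H]]]].
  - left; now apply Hpo.
  - right; left; now apply Hrf.
  - right; right; left; now apply Hst.
  - right; right; right; left; now apply Hcf.
  - right; right; right; right. destruct H as (p & t & E1 & E2 & I1 & I2).
    exists p, t. repeat split; auto; now apply HI.
Qed.

Lemma hb_through_same_trace P r1 r2 a beta b : same_trace P r1 r2 ->
  hb_through P r1 a beta b -> hb_through P r2 a beta b.
Proof.
  intros Htr (cs & Hne & Hsub & HL). exists cs. repeat split; auto.
  eapply LocallySorted_impl_in; [|exact HL]. intros x y _ _. now apply hb1_same_trace.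
Qed.

Lemma hb_through_before P rho a beta b : exec_SI P rho ->
  hb_through P rho a beta b -> exists c, before rho a c /\ before rho c b.
Proof.
  intros H (cs & Hne & _ & HL). destruct cs as [|c cs]; [easy|]. exists c.
  assert (HS : Sorted (before rho) (a :: c :: cs ++ [b])).
  { apply Sorted_LocallySorted_iff. eapply LocallySorted_impl_in; [|exact HL].
    intros x y _ _. exact (hb1_before P rho H x y). }
  assert (T : forall x y z, before rho x y -> before rho y z -> before rho x z).
  { intros x y z. apply before_trans, (exec_SI_NoDup P), H. }
  pose proof (Sorted_extends T HS) as Ha. inversion Ha.
  apply Sorted_inv in HS as [HS _].
  pose proof (Sorted_extends T HS) as Hb. apply Forall_app in Hb as [_ Hb].
  inversion Hb. auto.
Qed.

Lemma serial_no_event_between P rho p t c : exec_SI P rho -> serial rho ->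
  before rho (Issue p t) c -> before rho c (Com p t) -> False.
Proof.
  intros H S B1 B2. assert (N := exec_SI_NoDup P _ H).
  destruct (before_trans _ N _ _ _ B1 B2) as (a & b & E & Hc).
  destruct (S _ _ _ _ E Hc) as [b' ->].
  destruct B1 as (a1 & b1 & E1 & Hc1).
  assert (N' := N). rewrite E in E1, N'.
  destruct (NoDup_split_unique _ _ _ _ _ N' E1) as [_ <-].
  destruct Hc1 as [<-|Hc1].
  - exact (before_irrefl rho N _ B2).
  - apply (before_irrefl rho N c), before_trans with (Com p t); auto.
    exists (a ++ [Issue p t]), b'. rewrite E, <- app_assoc. auto.
Qed.

Lemma hb_through_not_serializable P tau beta p t : exec_SI P tau ->
  hb_through P tau (Issue p t) beta (Com p t) ->
  ~ exists rho, exec_SER P rho /\ same_trace P tau rho.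
Proof.
  intros H Hhb (rho & [Hrho Hser] & Htr).
  apply hb_through_same_trace with (r2 := rho) in Hhb; auto.
  destruct (hb_through_before P rho _ _ _ Hrho Hhb) as (c & B1 & B2).
  exact (serial_no_event_between P rho p t c Hrho Hser B1 B2).
Qed.

Lemma delayed_app P tau g pt : delayed P tau pt -> delayed P (tau ++ g) pt.
Proof.
  intros (a & b & g0 & -> & cs & Hne & Hs & HL).
  exists a, b, (g0 ++ g). split.
  - now rewrite <- app_assoc, <- app_comm_cons, <- app_assoc.
  - exists cs. repeat split; auto.
    eapply LocallySorted_impl_in; [|exact HL]. intros x y _ _. apply hb1_app.
Qed.

Lemma ndelayed_app_le P tau g : ndelayed P tau <= ndelayed P (tau ++ g).
Proof.
  unfold ndelayed, issued. rewrite flat_map_app.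
  apply NoDup_incl_length; [apply NoDup_filter, NoDup_nodup|].
  intros x Hx. apply filter_In in Hx as [Hx Hd]. apply filter_In. split.
  - apply nodup_In, in_app_iff. left. now apply nodup_In in Hx.
  - destruct (excluded_middle_informative (delayed P tau x)) as [D|]; [|discriminate].
    destruct (excluded_middle_informative (delayed P (tau ++ g) x)) as [|D']; auto.
    exfalso. now apply D', delayed_app.
Qed.

Theorem lemma2 (P : program) (alpha beta gamma : list event) (p : pid) (t : tid) :
  minimal_anomaly P (alpha ++ Issue p t :: beta ++ Com p t :: gamma) ->
  hb_through P (alpha ++ Issue p t :: beta ++ Com p t :: gamma) (Issue p t) beta (Com p t) ->
  minimal_anomaly P (alpha ++ Issue p t :: beta ++ [Com p t]).
Proof.
  set (tau' := alpha ++ Issue p t :: beta ++ [Com p t]).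
  assert (Etau : alpha ++ Issue p t :: beta ++ Com p t :: gamma = tau' ++ gamma).
  { unfold tau'. now rewrite <- app_assoc, <- app_comm_cons, <- app_assoc. }
  rewrite Etau. intros [[Hsi _] Hmin] Hhb.
  pose proof (exec_SI_prefix P _ _ Hsi) as Hsi'.
  assert (Hhb' : hb_through P tau' (Issue p t) beta (Com p t)).
  { apply hb_through_prefix with gamma; auto; unfold tau'.
    - apply in_app_iff; simpl; auto.
    - intros x Hx. apply in_app_iff; simpl; auto. }
  split.
  - split; auto. exact (hb_through_not_serializable P _ _ _ _ Hsi' Hhb').
  - intros tau'' H''. specialize (Hmin tau'' H''). pose proof (ndelayed_app_le P tau' gamma). lia.
Qed.
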